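(* Let $S \subseteq \mathbb{R}^n$ be nonempty, closed and convex, let $F = (F_1,\dots,F_m)^\top \colon S \to \mathbb{R}^m$ be continuous with each $F_i$ strictly convex, let $\ell > 0$, and let \[ u_\ell(x) := \max_{y \in S} \min_{i = 1,\dots,m} \left\{F_i(x) - F_i(y) - \frac{\ell}{2}\|x - y\|^2\right\}, \quad x\in S. \] If $x \in S$ is a stationary point of $\min_{x \in S} u_\ell(x)$, i.e., $u_\ell'(x; z - x) \ge 0$ for all $z \in S$, then $x$ is Pareto optimal for $\min_{x\in S} F(x)$.
   Context: $u_\ell'(x;d) := \lim_{t\searrow 0}(u_\ell(x+td)-u_\ell(x))/t$ (directional derivative). A point $x^\ast \in S$ is Pareto optimal for $\min_{x\in S} F(x)$ if there is no $x \in S$ with $F_i(x) \le F_i(x^\ast)$ for all $i$ and $F(x) \neq F(x^\ast)$. *)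

From HB Require Import structures.
From mathcomp Require Import all_boot all_order all_algebra.
From mathcomp Require Import all_classical all_reals all_analysis.
Set Implicit Arguments. Unset Strict Implicit. Unset Printing Implicit Defensive.
Import Order.TTheory GRing.Theory Num.Theory.
Import numFieldNormedType.Exports.
Local Open Scope classical_set_scope.
Local Open Scope ring_scope.

Definition sqnorm {R : realType} {n : nat} (x : 'rV[R]_n) : R :=
  \sum_(i < n) (x ord0 i) ^+ 2.

Definition is_convex_set {R : realType} {n : nat} (S : set 'rV[R]_n) : Prop :=
  forall x y t, S x -> S y -> 0 <= t <= 1 -> S (t *: x + (1 - t) *: y).

Definition strictly_convex_on {R : realType} {n : nat}
  (S : set 'rV[R]_n) (f : 'rV[R]_n -> R) : Prop :=
  forall x y t, S x -> S y -> x <> y -> 0 < t < 1 ->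
    f (t *: x + (1 - t) *: y) < t * f x + (1 - t) * f y.

Definition minI {R : realType} {m : nat} (g : 'I_m -> R) : R :=
  inf (range g).

(* u_l(x) = max_{y in S} min_i { F_i(x) - F_i(y) - l/2 ||x-y||^2 }
   (written as a supremum; the max is attained under the hypotheses) *)
Definition u_ell {R : realType} {n m : nat} (S : set 'rV[R]_n)
  (F : 'I_m -> 'rV[R]_n -> R) (l : R) (x : 'rV[R]_n) : R :=
  sup [set v | exists2 y, S y &
        v = minI (fun i => F i x - F i y - l / 2 * sqnorm (x - y))].

Definition has_dir_deriv {R : realType} {n : nat}
  (f : 'rV[R]_n -> R) (x d : 'rV[R]_n) (L : R) : Prop :=
  (fun t : R => (f (x + t *: d) - f x) / t) @ (0 : R)^'+ --> L.

Definition pareto_optimal {R : realType} {n m : nat} (S : set 'rV[R]_n)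
  (F : 'I_m -> 'rV[R]_n -> R) (xs : 'rV[R]_n) : Prop :=
  S xs /\ ~ (exists2 x, S x &
      (forall i, F i x <= F i xs) /\ ~ (forall i, F i x = F i xs)).

(* Write phi_ell F l x y for the inner minimum, so that u_ell x is its supremum over
   y in S.  If some z in S dominates x, strict convexity makes the midpoint of [z, x]
   strictly better than x in every objective, and a point of that segment close to x
   gives phi_ell x y > 0 = phi_ell x x.  As a minimum of l-strongly concave functions,
   phi_ell x has a maximizer p on the closed convex set S, and p <> x.  Moving from x
   towards p, the strict-convexity gap of the F i at the midpoint of [x, p], together
   with first-order optimality of p along [p, x], makes u_ell drop at a linear rate,
   so u_ell'(x; p - x) < 0, contradicting stationarity. *)

From mathcomp Require Import all_boot all_order all_algebra.
From mathcomp Require Import all_classical all_reals all_analysis.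
From mathcomp Require Import ring lra.
Import Order.TTheory GRing.Theory Num.Theory.
Import numFieldNormedType.Exports.
Local Open Scope classical_set_scope.
Local Open Scope ring_scope.

Lemma sup_eq_max (R : realType) (E : set R) (v : R) :
  E v -> ubound E v -> sup E = v.
Proof.
move=> Ev ubv; apply/le_anti/andP; split; first by apply: ge_sup => //; exists v.
by apply: ub_le_sup => //; exists v.
Qed.

Section MinI.
Context {R : realType} {m : nat}.

Lemma minI_attained (g : 'I_m.+1 -> R) :
  exists2 j, minI g = g j & forall i, g j <= g i.
Proof.
have [j _ gj_min] := @arg_minP _ R _ ord0 xpredT g isT.
exists j => [|i]; last exact: gj_min.
rewrite /minI /inf; apply: (canLR (@opprK _)); apply: sup_eq_max.
  by exists (g j) => //; exists j.
by move=> _ [_ [i _ <-] <-]; rewrite lerN2; apply: gj_min.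
Qed.

Lemma minI_le (g : 'I_m.+1 -> R) i : minI g <= g i.
Proof. by have [j -> /(_ i)] := minI_attained g. Qed.

Lemma minI_ge (g : 'I_m.+1 -> R) c : (forall i, c <= g i) -> c <= minI g.
Proof. by have [j -> _] := minI_attained g => /(_ j). Qed.

Lemma minI_gt0 (g : 'I_m.+1 -> R) : (forall i, 0 < g i) -> 0 < minI g.
Proof. by have [j -> _] := minI_attained g => /(_ j). Qed.

End MinI.

Section SquaredNorm.
Context {R : realType} {n : nat}.
Implicit Types (a b : 'rV[R]_n) (s : R).

Lemma sqnorm_ge0 a : 0 <= sqnorm a.
Proof. by apply: sumr_ge0 => i _; rewrite sqr_ge0. Qed.

Lemma sqnorm_coord a j : a ord0 j ^+ 2 <= sqnorm a.
Proof. by rewrite /sqnorm (bigD1 j) //= lerDl; apply: sumr_ge0 => i _; apply: sqr_ge0. Qed.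

Lemma sqnormZ s a : sqnorm (s *: a) = s ^+ 2 * sqnorm a.
Proof. by rewrite /sqnorm mulr_sumr; apply: eq_bigr => i _; rewrite !mxE; ring. Qed.

Lemma sqnormB_sym a b : sqnorm (a - b) = sqnorm (b - a).
Proof. by rewrite /sqnorm; apply: eq_bigr => i _; rewrite !mxE; ring. Qed.

Lemma sqnorm_convex_comb s a b :
  sqnorm (s *: a + (1 - s) *: b) =
  s * sqnorm a + (1 - s) * sqnorm b - s * (1 - s) * sqnorm (a - b).
Proof.
rewrite /sqnorm !mulr_sumr -big_split -sumrB /=; apply: eq_bigr => i _.
by rewrite !mxE; ring.
Qed.

Lemma sqnormD_le a b s : 0 < s ->
  sqnorm (a + b) <= (1 + s^-1) * sqnorm a + (1 + s) * sqnorm b.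
Proof.
move=> s_gt0; rewrite /sqnorm !mulr_sumr -big_split /=; apply: ler_sum => i _.
rewrite !mxE; set u := a ord0 i; set v := b ord0 i.
have -> : (1 + s^-1) * u ^+ 2 + (1 + s) * v ^+ 2 = (u + v) ^+ 2 + s^-1 * (u - s * v) ^+ 2.
  by field; rewrite gt_eqF.
by rewrite lerDl mulr_ge0 ?sqr_ge0 // invr_ge0 ltW.
Qed.

Lemma sqnormB_continuous a : continuous (fun b => sqnorm (a - b)).
Proof.
move=> b; apply: (cvg_big (@add_continuous R^o)); first exact: nbhs_filter.
move=> i _.
under eq_cvg do rewrite !mxE expr2.
rewrite !mxE expr2.
have coordB : continuous (fun c : 'rV[R]_n => a ord0 i - c ord0 i).
  by move=> c; apply: cvgB (cvg_cst _) (@coord_continuous R 1 n ord0 i c).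
exact: cvgM (coordB b) (coordB b).
Qed.

End SquaredNorm.

Definition convex_on {R : realType} {n : nat} (S : set 'rV[R]_n) (f : 'rV[R]_n -> R) :=
  forall a b t, S a -> S b -> 0 <= t <= 1 ->
    f (t *: a + (1 - t) *: b) <= t * f a + (1 - t) * f b.

Section Convexity.
Context {R : realType} {n : nat} {S : set 'rV[R]_n} {f : 'rV[R]_n -> R}.
Hypothesis convS : is_convex_set S.

Lemma strictly_convex_onW : strictly_convex_on S f -> convex_on S f.
Proof.
move=> fS a b t Sa Sb /andP[t_ge0 t_le1].
have [->|ab] := eqVneq a b.
  by rewrite -scalerDl -mulrDl addrC subrK scale1r mul1r.
have [->|t_neq0] := eqVneq t 0.
  by rewrite scale0r add0r subr0 scale1r mul0r add0r mul1r.
have [->|t_neq1] := eqVneq t 1.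
  by rewrite scale1r subrr scale0r addr0 mul1r mul0r addr0.
apply/ltW/fS => //; first exact/eqP.
by rewrite !lt_neqAle eq_sym t_neq0 t_neq1 t_ge0 t_le1.
Qed.

Lemma strictly_convex_midpoint_lt a b : strictly_convex_on S f -> S a -> S b -> a <> b ->
  f a <= f b -> f (2^-1 *: a + (1 - 2^-1) *: b) < f b.
Proof.
move=> fS Sa Sb ab fab; apply: (lt_le_trans (fS _ _ _ Sa Sb ab _)).
  by apply/andP; split; lra.
lra.
Qed.

(* [x + t (p - x)] is the convex combination of [x] and the midpoint of [x, p] with weight [2 t]. *)
Lemma convex_on_segment_gap x p eps t : convex_on S f -> S x -> S p ->
  f (2^-1 *: x + (1 - 2^-1) *: p) <= 2^-1 * (f x + f p) - eps -> 0 <= t <= 2^-1 ->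
  f (x + t *: (p - x)) <= (1 - t) * f x + t * f p - 2 * t * eps.
Proof.
move=> fS Sx Sp f_mid /andP[t_ge0 t_le].
set q := 2^-1 *: x + (1 - 2^-1) *: p.
have -> : x + t *: (p - x) = (1 - 2 * t) *: x + (1 - (1 - 2 * t)) *: q.
  by apply/rowP => k; rewrite /q !mxE; field.
have Sq : S q by apply: convS => //; apply/andP; split; lra.
apply: le_trans (fS _ _ _ Sx Sq _) _.
  by apply/andP; split; lra.
have : 2 * t * f q <= 2 * t * (2^-1 * (f x + f p) - eps) by rewrite ler_wpM2l // mulr_ge0.
have : 2 * t * 2^-1 = t by field.
nra.
Qed.

Lemma convex_on_lower_bound x : convex_on S f -> {within S, continuous f} -> S x ->
  exists C, forall y, S y -> f x - f y <= C * (1 + Num.sqrt (sqnorm (y - x))).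
Proof.
move=> fS f_cont Sx.
have := proj1 (subspace_continuousP _ _) f_cont x Sx.
move/cvgrPdist_lt => /(_ 1 ltr01); rewrite near_withinE => /nbhs_ballP[e e_gt0 near_x].
set a := Num.min e 1.
have a_gt0 : 0 < a by rewrite lt_min e_gt0 ltr01.
exists (2 / a) => y Sy.
set r := Num.sqrt (sqnorm (y - x)).
have r_ge0 : 0 <= r by apply: sqrtr_ge0.
set s := a / (2 * (1 + r)).
have den_gt0 : 0 < 2 * (1 + r) by rewrite mulr_gt0 // ltr_pwDl.
have s_gt0 : 0 < s by rewrite divr_gt0.
have s_r : s * (2 * (1 + r)) = a by rewrite divfK // gt_eqF.
have s_le1 : s <= 1.
  have : a <= 1 by rewrite ge_min lexx orbT.
  nra.
set y' := s *: y + (1 - s) *: x.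
have Sy' : S y' by apply: convS => //; rewrite ltW.
have y'_near : ball x e y'.
  split => // i j; rewrite (ord1 i) /ball /=.
  have -> : x ord0 j - y' ord0 j = s * (x ord0 j - y ord0 j) by rewrite !mxE; ring.
  rewrite normrM gtr0_norm //.
  have coord_le : `|x ord0 j - y ord0 j| <= r.
    rewrite -sqrtr_sqr; apply: ler_wsqrtr.
    have -> : (x ord0 j - y ord0 j) ^+ 2 = (y - x) ord0 j ^+ 2 by rewrite !mxE; ring.
    exact: sqnorm_coord.
  have : a <= e by rewrite ge_min lexx.
  have : s * `|x ord0 j - y ord0 j| <= s * r by rewrite ler_wpM2l // ltW.
  nra.
have fy'_gt : f x - f y' < 1 by apply: le_lt_trans (ler_norm _) (near_x _ y'_near Sy').
have fy'_le : f y' <= s * f y + (1 - s) * f x by apply: fS => //; rewrite ltW.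
have : s * (f x - f y) < 1 by lra.
have -> : 2 / a * (1 + r) = s^-1 by rewrite /s invf_div mulrAC.
by move=> lt1; rewrite -[s^-1]mulr1 ler_pdivlMl // ltW.
Qed.

End Convexity.

Definition phi_ell {R : realType} {n m : nat} (F : 'I_m -> 'rV[R]_n -> R) (l : R)
  (x y : 'rV[R]_n) : R :=
  minI (fun i => F i x - F i y - l / 2 * sqnorm (x - y)).

Section MeritFunction.
Context {R : realType} {n m : nat} {S : set 'rV[R]_n} {F : 'I_m.+1 -> 'rV[R]_n -> R} {l : R}.
Hypotheses (l_gt0 : 0 < l) (closedS : closed S) (convS : is_convex_set S).
Hypotheses (F_convex : forall i, convex_on S (F i))
  (F_cont : forall i, {within S, continuous (F i)}).

Local Notation phi := (phi_ell F l).

Lemma phi_ell_xx x : phi x x = 0.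
Proof.
have term0 i : F i x - F i x - l / 2 * sqnorm (x - x) = 0.
  by rewrite !subrr /sqnorm big1 ?mulr0 ?subrr // => j _; rewrite mxE expr0n.
apply/le_anti/andP; split; first by rewrite -(term0 ord0) minI_le.
by apply: minI_ge => i; rewrite term0.
Qed.

Lemma phi_ell_strongly_concave x y1 y2 s : S y1 -> S y2 -> 0 <= s <= 1 ->
  s * phi x y1 + (1 - s) * phi x y2 + l / 2 * (s * (1 - s)) * sqnorm (y1 - y2)
  <= phi x (s *: y1 + (1 - s) *: y2).
Proof.
move=> Sy1 Sy2 /andP[s_ge0 s_le1]; apply: minI_ge => i.
have -> : x - (s *: y1 + (1 - s) *: y2) = s *: (x - y1) + (1 - s) *: (x - y2).
  by apply/rowP => j; rewrite !mxE; ring.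
rewrite sqnorm_convex_comb.
have -> : x - y1 - (x - y2) = y2 - y1 by apply/rowP => j; rewrite !mxE; ring.
rewrite (sqnormB_sym y2).
have Fi_conv := F_convex i _ _ _ Sy1 Sy2 (introT andP (conj s_ge0 s_le1)).
have phi1 := ler_wpM2l s_ge0 (minI_le (fun i => F i x - F i y1 - l / 2 * sqnorm (x - y1)) i).
have s'_ge0 : 0 <= 1 - s by rewrite subr_ge0.
have phi2 := ler_wpM2l s'_ge0 (minI_le (fun i => F i x - F i y2 - l / 2 * sqnorm (x - y2)) i).
rewrite /phi_ell; move: Fi_conv phi1 phi2; rewrite !mulrBr; lra.
Qed.

Lemma phi_ell_midpoint_ub x y1 y2 M : S y1 -> S y2 -> (forall y, S y -> phi x y <= M) ->
  phi x y1 + phi x y2 + l / 4 * sqnorm (y1 - y2) <= 2 * M.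
Proof.
move=> Sy1 Sy2 phi_ub.
have half : 0 <= (2^-1 : R) <= 1 by apply/andP; split; lra.
have := phi_ell_strongly_concave x _ _ _ Sy1 Sy2 half.
have := phi_ub _ (convS _ _ _ Sy1 Sy2 half).
lra.
Qed.

Lemma phi_ell_near_max_close x u y1 y2 eta : S y1 -> S y2 ->
  (forall y, S y -> phi x y <= u) -> u - eta < phi x y1 -> u - eta < phi x y2 ->
  l * sqnorm (y1 - y2) < 8 * eta.
Proof. by move=> Sy1 Sy2 u_ub; have := phi_ell_midpoint_ub x _ _ _ Sy1 Sy2 u_ub; lra. Qed.

Lemma phi_ell_segment_ge x y s : S x -> S y -> 0 <= s <= 1 ->
  s * minI (fun i => F i x - F i y) - l / 2 * (s ^+ 2 * sqnorm (x - y))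
  <= phi x (s *: y + (1 - s) *: x).
Proof.
move=> Sx Sy s01; apply: minI_ge => i.
have -> : x - (s *: y + (1 - s) *: x) = s *: (x - y) by apply/rowP => j; rewrite !mxE; ring.
rewrite sqnormZ lerD2r.
have := F_convex i _ _ _ Sy Sx s01.
have : s * minI (fun i => F i x - F i y) <= s * (F i x - F i y).
  by rewrite ler_wpM2l ?minI_le //; case/andP: s01.
lra.
Qed.

Lemma phi_ell_pos x w : S x -> S w -> (forall i, F i w < F i x) ->
  exists2 y, S y & 0 < phi x y.
Proof.
move=> Sx Sw w_lt.
set c := minI (fun i => F i x - F i w).
have c_gt0 : 0 < c by apply: minI_gt0 => i; rewrite subr_gt0.
set N := sqnorm (x - w).
have lN_ge0 : 0 <= l * N by rewrite mulr_ge0 ?sqnorm_ge0 // ltW.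
set s := c / (c + l * N).
have cN_gt0 : 0 < c + l * N by lra.
have s_gt0 : 0 < s by rewrite divr_gt0.
have s_def : s * (c + l * N) = c by rewrite divfK // gt_eqF.
have s01 : 0 <= s <= 1 by apply/andP; split; nra.
exists (s *: w + (1 - s) *: x); first exact: convS _ _ _ Sw Sx s01.
apply: lt_le_trans (phi_ell_segment_ge _ _ _ Sx Sw s01); rewrite -/c -/N.
nra.
Qed.

(* The quadratic penalty outgrows the at most linear growth of [F x - F y] in [|y - x|]. *)
Lemma phi_ell_bounded x : S x -> exists M, forall y, S y -> phi x y <= M.
Proof.
move=> Sx; have [C C_bound] := convex_on_lower_bound convS x (F_convex ord0) (F_cont ord0) Sx.
exists (C + C ^+ 2 / (2 * l)) => y Sy.
apply: le_trans (minI_le _ ord0) _; rewrite sqnormB_sym.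
have := C_bound y Sy; set r := Num.sqrt _.
have <- : r ^+ 2 = sqnorm (y - x) by rewrite sqr_sqrtr ?sqnorm_ge0.
have : C * r - l / 2 * r ^+ 2 <= C ^+ 2 / (2 * l).
  rewrite -subr_ge0.
  have -> : C ^+ 2 / (2 * l) - (C * r - l / 2 * r ^+ 2) = l / 2 * (r - C / l) ^+ 2.
    by field; rewrite gt_eqF.
  by rewrite mulr_ge0 ?sqr_ge0 // divr_ge0 // ltW.
lra.
Qed.

Lemma phi_ell_limit_ge x p c {G : set_system 'rV[R]_n} (G_proper : ProperFilter G) :
  S p -> G S -> G --> p -> (forall e, 0 < e -> G [set y | c - e < phi x y]) ->
  c <= phi x p.
Proof.
move=> Sp GS G_cvg near_c.
have G_within : G --> within S (nbhs p).
  move=> P /G_cvg GP; apply: filterS (filterI GS GP) => y [Sy]; exact.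
have term_cvg i : (fun y => F i x - F i y - l / 2 * sqnorm (x - y)) @ G -->
    F i x - F i p - l / 2 * sqnorm (x - p).
  apply: cvgB; first apply: cvgB; first exact: cvg_cst.
    exact: cvg_trans (cvg_app _ G_within) (proj1 (subspace_continuousP _ _) (F_cont i) p Sp).
  apply: cvgM; first exact: cvg_cst.
  exact: cvg_trans (cvg_app _ G_cvg) (sqnormB_continuous x p).
apply: minI_ge => i; apply/ler_addgt0Pr => e e_gt0; rewrite -lerBlDr.
apply: (@closed_cvg _ _ G G_proper _ _ (@closed_ge _ (c - e)) _ _ (term_cvg i)).
by apply: filterS (near_c e e_gt0) => y /lt_le_trans/(_ (minI_le _ i))/ltW.
Qed.

(* Near-maximizers of the strongly concave [phi x] form a Cauchy filter. *)
Lemma phi_ell_argmax x : S x -> exists2 p, S p & forall y, S y -> phi x y <= phi x p.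
Proof.
move=> Sx; have [M M_ub] := phi_ell_bounded x Sx.
set E := [set v | exists2 y, S y & v = phi x y].
have supE : has_sup E.
  by split; [exists (phi x x), x | exists M => _ [y Sy ->]; apply: M_ub].
set u := sup E.
have u_ub y : S y -> phi x y <= u by move=> Sy; apply: sup_upper_bound => //; exists y.
pose G := filter_from [set e : R | 0 < e] (fun e => [set y | S y /\ u - e < phi x y]).
have G_proper : ProperFilter G.
  apply: filter_from_proper; last first.
    by move=> e /sup_adherent/(_ supE)[_ [y Sy ->] lt_y]; exists y.
  apply: filter_from_filter; first by exists 1; apply: ltr01.
  move=> e1 e2 e1_gt0 e2_gt0; exists (Num.min e1 e2); first by rewrite /= lt_min e1_gt0.
  move=> y [Sy lt_y]; split; split => //; apply: le_lt_trans lt_y;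
    by rewrite lerD2l lerN2 ge_min lexx ?orbT.
have GS : G S by exists 1; [apply: ltr01 | move=> y []].
have G_cauchy : cauchy G.
  apply: cauchy_exP => e e_gt0.
  have eta_gt0 : 0 < l * e ^+ 2 / 8 by rewrite divr_gt0 // mulr_gt0 // exprn_gt0.
  have [_ [y0 Sy0 ->] lt_y0] := sup_adherent eta_gt0 supE.
  exists y0, (l * e ^+ 2 / 8) => // y [Sy lt_y].
  split => // i j; rewrite (ord1 i) /ball /=.
  have : l * sqnorm (y0 - y) < l * e ^+ 2.
    have := phi_ell_near_max_close x _ _ _ _ Sy0 Sy u_ub lt_y0 lt_y.
    by rewrite mulrCA divff ?mulr1.
  rewrite ltr_pM2l // => /(le_lt_trans (sqnorm_coord _ j)); rewrite !mxE => lt_sq.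
  rewrite -(ltr_pXn2r (ltn0Sn 1)) ?nnegrE ?normr_ge0 ?(ltW e_gt0) //.
  by rewrite real_normK ?num_real.
have G_cvg : G --> lim G by apply: cauchy_cvg.
set p := lim G in G_cvg.
have Sp : S p by apply: (@closed_cvg _ _ G G_proper id S closedS GS p G_cvg).
exists p => // y Sy; apply: le_trans (u_ub _ Sy) (phi_ell_limit_ge x p u G_proper Sp GS G_cvg _).
by move=> e e_gt0; exists e => // z [].
Qed.

Lemma u_ell_argmax x p : S p -> (forall y, S y -> phi x y <= phi x p) ->
  u_ell S F l x = phi x p.
Proof. by move=> Sp p_max; apply: sup_eq_max; [exists p | move=> _ [y Sy ->]; apply: p_max]. Qed.

(* First-order optimality of the maximizer [p] along the segment [p, x]. *)
Lemma phi_ell_argmax_slope x p : S x -> S p -> (forall y, S y -> phi x y <= phi x p) ->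
  l * sqnorm (x - p) <= minI (fun i => F i x - F i p).
Proof.
move=> Sx Sp p_max; set A := minI _; set D := sqnorm (x - p).
have lD_ge0 : 0 <= l * D by rewrite mulr_ge0 ?sqnorm_ge0 // ltW.
have phi_p : phi x p <= A - l / 2 * D.
  have [j A_j _] := minI_attained (fun i => F i x - F i p).
  by rewrite /A A_j; apply: minI_le.
apply/ler_addgt0Pr => e e_gt0.
set s := e / (e + l * D).
have eD_gt0 : 0 < e + l * D by lra.
have s_gt0 : 0 < s by rewrite divr_gt0.
have s_def : s * (e + l * D) = e by rewrite divfK // gt_eqF.
have s01 : 0 <= 1 - s <= 1 by apply/andP; split; nra.
have := le_trans (phi_ell_segment_ge x p _ Sx Sp s01) (p_max _ (convS _ _ _ Sp Sx s01)).
move/(le_trans)/(_ phi_p); rewrite -/A -/D => seg.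
have : s * (l * D - l / 2 * s * D) <= s * A by nra.
rewrite ler_pM2l // => slope_s.
nra.
Qed.

(* The bound on [t] comes from Young's inequality with weight [1 + l |x - p|^2 / eps],
   used to compare [|x - y|^2] with [|x - p|^2] and [|p - y|^2]. *)
Lemma u_ell_descent x p eps t : S x -> S p -> (forall y, S y -> phi x y <= phi x p) ->
  0 < eps -> (forall i, F i (2^-1 *: x + (1 - 2^-1) *: p) <= 2^-1 * (F i x + F i p) - eps) ->
  0 < t -> t <= 2^-1 -> t * (1 + l * sqnorm (x - p) / eps) <= 2^-1 ->
  u_ell S F l (x + t *: (p - x)) <= phi x p - t * eps.
Proof.
move=> Sx Sp p_max eps_gt0 mid_gap t_gt0 t_le beta_t.
set D := sqnorm (x - p) in beta_t *; set beta := 1 + l * D / eps in beta_t.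
have D_ge0 : 0 <= D by apply: sqnorm_ge0.
have beta_gt0 : 0 < beta by rewrite ltr_pwDl // divr_ge0 ?mulr_ge0 // ltW.
have lD_le : l * D / beta <= eps.
  rewrite ler_pdivrMr // /beta mulrDr mulr1 mulrCA divff ?gt_eqF // mulr1.
  by rewrite lerDr ltW.
set w := x + t *: (p - x).
apply: ge_sup; first by exists (phi w x), x.
move=> _ [y Sy ->]; set r := sqnorm (p - y).
have [j phi_xy _] := minI_attained (fun i => F i x - F i y - l / 2 * sqnorm (x - y)).
apply: le_trans (minI_le _ j) _.
have Fw := convex_on_segment_gap convS _ _ _ _ (F_convex j) Sx Sp (mid_gap j)
  (introT andP (conj (ltW t_gt0) t_le)).
have -> : w - y = (1 - t) *: (x - y) + (1 - (1 - t)) *: (p - y).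
  by apply/rowP => k; rewrite !mxE; ring.
rewrite sqnorm_convex_comb.
have -> : x - y - (p - y) = x - p by apply/rowP => k; rewrite !mxE; ring.
have Nxy : sqnorm (x - y) <= (1 + beta^-1) * D + (1 + beta) * r.
  have -> : x - y = (x - p) + (p - y) by apply/rowP => k; rewrite !mxE; ring.
  exact: sqnormD_le.
have phi_y : phi x y + l / 4 * r <= phi x p.
  have := phi_ell_midpoint_ub x _ _ _ Sp Sy p_max; rewrite -/r.
  lra.
have slope : l * D <= F j x - F j p.
  exact: le_trans (phi_ell_argmax_slope _ _ Sx Sp p_max) (minI_le _ j).
have phi_xy' : phi x y = F j x - F j y - l / 2 * sqnorm (x - y) := phi_xy.
rewrite phi_xy' in phi_y; rewrite -/w -/r -/D in Fw *.
move: (sqnorm (x - y)) Nxy phi_y => N Nxy phi_y.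
have l_t_N : l * t * N <= l * t * ((1 + beta^-1) * D + (1 + beta) * r).
  by rewrite ler_wpM2l // mulr_ge0 // ltW.
have t_slope : t * (l * D) <= t * (F j x - F j p) by rewrite ler_wpM2l // ltW.
have t_lD : t * (l * D / beta) <= t * eps by rewrite ler_wpM2l // ltW.
have lr_ge0 : 0 <= l * r by rewrite mulr_ge0 ?sqnorm_ge0 // ltW.
have beta_r : t * beta * (l * r) <= 2^-1 * (l * r) by rewrite ler_wpM2r.
have ttD : 0 <= l * (t * t * D) by rewrite !mulr_ge0 // ltW.
nra.
Qed.

End MeritFunction.

Lemma has_dir_deriv_le {R : realType} {n : nat} {f : 'rV[R]_n -> R} {x d : 'rV[R]_n}
  {L eps delta : R} :
  has_dir_deriv f x d L -> 0 < delta ->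
  (forall t, 0 < t < delta -> f (x + t *: d) <= f x - t * eps) -> L <= - eps.
Proof.
move=> f_deriv delta_gt0 f_descent.
apply: (closed_cvg _ (@closed_le _ (- eps)) _ _ f_deriv).
near=> t.
have t_gt0 : 0 < t by near: t; apply: nbhs_right_gt.
have t_lt : t < delta by near: t; apply: nbhs_right_lt.
have := f_descent t (introT andP (conj t_gt0 t_lt)).
rewrite /= ler_pdivrMr //; lra.
Unshelve. all: by end_near.
Qed.

Section Stationarity.
Context {R : realType} {n m : nat} {S : set 'rV[R]_n} {F : 'I_m.+1 -> 'rV[R]_n -> R} {l : R}.
Hypotheses (l_gt0 : 0 < l) (convS : is_convex_set S).
Hypothesis F_strict : forall i, strictly_convex_on S (F i).

Let F_convex i : convex_on S (F i) := strictly_convex_onW (F_strict i).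

Local Notation phi := (phi_ell F l).

Lemma phi_ell_pos_of_dominated x : S x ->
  (exists2 z, S z & (forall i, F i z <= F i x) /\ ~ (forall i, F i z = F i x)) ->
  exists2 y, S y & 0 < phi x y.
Proof.
move=> Sx [z Sz [z_le z_neq]].
have z_neq_x : z <> x by move=> zx; apply: z_neq => i; rewrite zx.
have half : 0 <= (2^-1 : R) <= 1 by apply/andP; split; lra.
apply: (phi_ell_pos l_gt0 convS F_convex _ _ Sx (convS _ _ _ Sz Sx half)) => i.
exact: strictly_convex_midpoint_lt _ _ (F_strict i) Sz Sx z_neq_x (z_le i).
Qed.

Lemma strictly_convex_midpoint_gap x p : S x -> S p -> x <> p -> exists2 eps, 0 < eps &
  forall i, F i (2^-1 *: x + (1 - 2^-1) *: p) <= 2^-1 * (F i x + F i p) - eps.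
Proof.
move=> Sx Sp x_neq_p.
exists (minI (fun i => 2^-1 * (F i x + F i p) - F i (2^-1 *: x + (1 - 2^-1) *: p))).
  apply: minI_gt0 => i; have half : 0 < (2^-1 : R) < 1 by apply/andP; split; lra.
  by have := F_strict i _ _ _ Sx Sp x_neq_p half; lra.
by move=> i; rewrite lerBrDl -lerBrDr minI_le.
Qed.

Lemma u_ell_dir_deriv_lt0 x p L : S x -> S p -> (forall y, S y -> phi x y <= phi x p) ->
  p <> x -> has_dir_deriv (u_ell S F l) x (p - x) L -> L < 0.
Proof.
move=> Sx Sp p_max p_neq_x L_deriv.
have [eps eps_gt0 mid_gap] := strictly_convex_midpoint_gap x p Sx Sp (nesym p_neq_x).
set beta := 1 + l * sqnorm (x - p) / eps.
have beta_gt0 : 0 < beta by rewrite ltr_pwDl // divr_ge0 ?mulr_ge0 ?sqnorm_ge0 // ltW.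
set delta := Num.min 2^-1 (2^-1 / beta).
have delta_gt0 : 0 < delta by rewrite lt_min invr_gt0 ltr0n divr_gt0 ?invr_gt0.
suff : L <= - eps by lra.
apply: (has_dir_deriv_le L_deriv delta_gt0) => t /andP[t_gt0 t_lt].
rewrite (u_ell_argmax x p Sp p_max).
apply: (u_ell_descent l_gt0 convS F_convex _ _ _ _ Sx Sp p_max eps_gt0 mid_gap t_gt0).
  by apply: ltW (lt_le_trans t_lt _); rewrite ge_min lexx.
have : t < 2^-1 / beta by apply: lt_le_trans t_lt _; rewrite ge_min lexx orbT.
by rewrite ltr_pdivlMr // => /ltW.
Qed.

End Stationarity.

Theorem theorem3p8 (R : realType) (n m : nat) (S : set 'rV[R]_n)
  (F : 'I_m -> 'rV[R]_n -> R) (l : R) (x : 'rV[R]_n) :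
  S !=set0 -> closed S -> is_convex_set S ->
  (forall i, {within S, continuous (F i)}) ->
  (forall i, strictly_convex_on S (F i)) ->
  0 < l ->
  S x ->
  (forall z, S z -> exists2 L : R,
      has_dir_deriv (u_ell S F l) x (z - x) L & 0 <= L) ->
  pareto_optimal S F x.
Proof.
move=> _ closedS convS F_cont F_strict l_gt0 Sx stationary.
(* Without objectives Pareto optimality is trivial; otherwise [minI] is a genuine minimum. *)
case: m F F_cont F_strict stationary => [|m] F F_cont F_strict stationary.
  by split => // -[z _ [_ not_eq]]; apply: not_eq => -[].
split => // dominated.
have [y Sy phi_y_gt0] := phi_ell_pos_of_dominated l_gt0 convS F_strict x Sx dominated.
have F_convex i := strictly_convex_onW (F_strict i).
have [p Sp p_max] := phi_ell_argmax l_gt0 closedS convS F_convex F_cont x Sx.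
have p_neq_x : p <> x by move=> px; have := p_max _ Sy; rewrite px phi_ell_xx; lra.
have [L L_deriv L_ge0] := stationary p Sp.
have := u_ell_dir_deriv_lt0 l_gt0 convS F_strict x p L Sx Sp p_max p_neq_x L_deriv.
lra.
Qed.
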